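(* Let $p\in(0,1)$, $t\subseteq[n]$, and $1\le k\le n-1$. Then \[ \mathrm{Var}(T^t_{k+1})\ge(k+1)\binom{n-|t|}{2k+1}\binom{2k+1}{k}(\mu^t_{k+1})^2\bigl\{p^{-|t|}-1\bigr\}. \]
   Context: $G(n,p)$ is the random graph on $[n]$ where each of the $\binom n2$ edges is present independently with probability $p$; $Y_{i,j}=Y_{j,i}$ is the indicator of edge $\{i,j\}$. $C_k$ is the set of $k$-element subsets of $[n]$. For $t\subseteq[n]$, \[ T^t_k=\sum_{s\in C_k,\ s\cap t=\varnothing}\ \prod_{i\ne j\in s}Y_{i,j}\prod_{i\in s,\ j\in t}Y_{i,j} \] (the number of $(k-1)$-simplices in the link of $t$ in the clique complex $X(n,p)$, when $t$ is a simplex), and $\mu^t_{k}=p^{\binom{k}{2}+|t|k}$, so $\mathbb{E}T^t_k=\binom{n-|t|}{k}\mu^t_k$. *)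

From mathcomp Require Import all_boot all_order all_algebra.
Set Implicit Arguments. Unset Strict Implicit. Unset Printing Implicit Defensive.
Import Order.TTheory GRing.Theory Num.Theory.
Local Open Scope ring_scope.

(* The 2-element subsets of [n] = 'I_n : the possible edges. *)
Definition pairs (n : nat) : {set {set 'I_n}} := [set e : {set 'I_n} | #|e| == 2%N].

(* A graph on [n] is a set of edges G \subset pairs n; its probability in G(n,p). *)
Definition gnp_prob (R : realFieldType) (n : nat) (p : R) (G : {set {set 'I_n}}) : R :=
  p ^+ #|G| * (1 - p) ^+ (#|pairs n| - #|G|).

Definition gnp_E (R : realFieldType) (n : nat) (p : R) (X : {set {set 'I_n}} -> R) : R :=
  \sum_(G in powerset (pairs n)) gnp_prob p G * X G.

Definition gnp_Var (R : realFieldType) (n : nat) (p : R) (X : {set {set 'I_n}} -> R) : R :=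
  gnp_E p (fun G => X G ^+ 2) - (gnp_E p X) ^+ 2.

Definition Yind (R : realFieldType) (n : nat) (i j : 'I_n) (G : {set {set 'I_n}}) : R :=
  ((i != j) && ([set i; j] \in G))%:R.

Definition Tlink (R : realFieldType) (n : nat) (t : {set 'I_n}) (k : nat)
    (G : {set {set 'I_n}}) : R :=
  \sum_(s : {set 'I_n} | (#|s| == k) && [disjoint s & t])
     ((\prod_(i in s) \prod_(j in s | i != j) Yind R i j G) *
      (\prod_(i in s) \prod_(j in t) Yind R i j G)).

Definition mu (R : realFieldType) (n : nat) (p : R) (t : {set 'I_n}) (k : nat) : R :=
  p ^+ ('C(k, 2) + #|t| * k).

From mathcomp Require Import all_boot all_order all_algebra zify ring.
Set Implicit Arguments. Unset Strict Implicit. Unset Printing Implicit Defensive.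
Import Order.TTheory GRing.Theory Num.Theory.
Local Open Scope ring_scope.

(* The summand of T^t_{k+1} indexed by s is the indicator that G contains the
   edge set E_s of the clique on s joined to t, so Var T is the double sum of
   the covariances p^|E_s :|: E_s'| - p^|E_s| p^|E_s'|, all of which are
   nonnegative.  When s and s' meet in a single vertex v, E_s and E_s' share
   the |t| edges from v to t, which makes the covariance at least
   mu^2 (p^-|t| - 1).  There are C(n-|t|, k+1) choices of s and, for each,
   at least (k+1) C(n-|t|-k-1, k) choices of s' meeting it in one vertex;
   the product of these counts is (k+1) C(n-|t|, 2k+1) C(2k+1, k). *)

Lemma prodr_nat_bool (R : comPzSemiRingType) (I : finType) (P : pred I) (b : I -> bool) :
  \prod_(i | P i) ((b i)%:R : R) = [forall i, P i ==> b i]%:R.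
Proof.
have [allb | /forallPn [i]] := boolP [forall i, P i ==> b i].
  by apply: big1 => i Pi; move/forallP/(_ i): allb; rewrite Pi /= => ->.
by rewrite negb_imply => /andP [Pi /negbTE bi]; rewrite (bigD1 i Pi) /= bi mul0r.
Qed.

Lemma bin_mul_bin_sub m a b :
  ('C(m, a) * 'C(m - a, b) = 'C(m, a + b) * 'C(a + b, a))%N.
Proof.
apply/eqP; rewrite -(eqn_pmul2r (fact_gt0 a)) -(eqn_pmul2r (fact_gt0 b)); apply/eqP.
have Cab : ('C(a + b, a) * (a`! * b`!) = (a + b)`!)%N.
  by rewrite -{2}(addKn a b) bin_fact // leq_addr.
have -> : ('C(m, a + b) * 'C(a + b, a) * a`! * b`! = 'C(m, a + b) * (a + b)`!)%N.
  by rewrite -Cab; ring.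
have -> : ('C(m, a) * 'C(m - a, b) * a`! * b`! = ('C(m, a) * a`!) * ('C(m - a, b) * b`!))%N.
  by ring.
rewrite !bin_ffact; elim: b {Cab} => [|b IHb]; first by rewrite addn0 muln1.
by rewrite addnS !ffactnSr mulnA IHb subnDA.
Qed.

Definition inner_edges n (s : {set 'I_n}) : {set {set 'I_n}} :=
  [set e : {set 'I_n} | e \subset s & #|e| == 2%N].

Definition cross_edges n (s t : {set 'I_n}) : {set {set 'I_n}} :=
  [set [set x.1; x.2] | x in setX s t].

Definition link_edges n (s t : {set 'I_n}) := inner_edges s :|: cross_edges s t.

Definition disjoint_ksets n (t : {set 'I_n}) k :=
  [set s : {set 'I_n} | (#|s| == k) && [disjoint s & t]].

Lemma in_cross_edges n (s t : {set 'I_n}) i j :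
  i \in s -> j \in t -> [set i; j] \in cross_edges s t.
Proof. by move=> iS jt; apply/imsetP; exists (i, j); rewrite // inE iS jt. Qed.

Lemma pair_inj n (v : 'I_n) (A : {set 'I_n}) : v \notin A ->
  {in A &, injective (fun j => [set v; j])}.
Proof.
move=> vA j j' jA j'A Ejj'.
have : j \in [set v; j'] by rewrite -Ejj' set22.
by rewrite !inE => /orP [/eqP ejv | /eqP //]; rewrite -ejv jA in vA.
Qed.

Section LinkEdges.
Variables (n : nat) (s t : {set 'I_n}).
Hypothesis st : [disjoint s & t].

Lemma link_edges_pairs : link_edges s t \subset pairs n.
Proof.
apply/subsetP => e; rewrite !inE => /orP [/andP [_ //] |].
case/imsetP => [[i j]]; rewrite inE /= => /andP [iS jt] ->.
by rewrite cards2; case: (eqVneq i j) => [eij | //]; rewrite -eij (disjointFr st iS) in jt.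
Qed.

Lemma card_link_edges : #|link_edges s t| = ('C(#|s|, 2) + #|t| * #|s|)%N.
Proof.
have inner_cross0 : inner_edges s :&: cross_edges s t = set0.
  apply/setP => e; rewrite !inE; apply/negP => /andP [/andP [es _]].
  case/imsetP => [[i j]]; rewrite inE /= => /andP [_ jt] ee.
  have jS : j \in s by apply: (subsetP es); rewrite ee set22.
  by rewrite (disjointFr st jS) in jt.
rewrite cardsU inner_cross0 cards0 subn0 cards_draws; congr (_ + _)%N.
rewrite card_in_imset ?cardsX 1?mulnC // => -[i j] [i' j'].
rewrite !inE /= => /andP [iS jt] /andP [i'S j't] Eij.
have ii' : i = i'.
  have : i \in [set i'; j'] by rewrite -Eij set21.
  by rewrite !inE => /orP [/eqP // | /eqP eij]; rewrite -eij (disjointFr st iS) in j't.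
by rewrite -ii' in Eij *; rewrite (pair_inj _ jt j't Eij) // (disjointFr st iS).
Qed.

Lemma card_link_edgesI (s' : {set 'I_n}) (v : 'I_n) : v \in s -> v \in s' ->
  (#|t| <= #|link_edges s t :&: link_edges s' t|)%N.
Proof.
move=> vs vs'; have vt : v \notin t by rewrite (disjointFr st vs).
rewrite -(card_in_imset (pair_inj vt)); apply: subset_leq_card.
by apply/subsetP => _ /imsetP [j jt ->]; rewrite !inE !in_cross_edges ?orbT.
Qed.

Lemma Tlink_summandE (R : realFieldType) (G : {set {set 'I_n}}) :
  (\prod_(i in s) \prod_(j in s | i != j) Yind R i j G) *
    (\prod_(i in s) \prod_(j in t) Yind R i j G) = (link_edges s t \subset G)%:R.
Proof.
rewrite /Yind.
under eq_bigr => i _ do rewrite prodr_nat_bool.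
under [X in _ * X]eq_bigr => i _ do rewrite prodr_nat_bool.
rewrite !prodr_nat_bool -natrM mulnb; congr (nat_of_bool _)%:R.
apply/andP/subsetP => [[/forallP inner /forallP cross] e | sub].
  rewrite inE => /orP [].
    rewrite inE => /andP [es /cards2P [i [j [ij ee]]]]; subst e.
    have iS : i \in s by apply: (subsetP es); exact: set21.
    have jS : j \in s by apply: (subsetP es); exact: set22.
    by move: (inner i); rewrite iS => /forallP /(_ j); rewrite jS ij.
  case/imsetP => [[i j]]; rewrite inE /= => /andP [iS jt] ->.
  by move: (cross i); rewrite iS => /forallP /(_ j); rewrite jt => /andP [].
split; apply/forallP => i; apply/implyP => iS; apply/forallP => j; apply/implyP.
  move=> /andP [jS ij]; rewrite ij sub // !inE cards2 ij andbT.
  by apply/orP; left; apply/subsetP => x; rewrite !inE => /orP [] /eqP ->.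
move=> jt; have ij : i != j by apply: contraTneq jt => <-; rewrite (disjointFr st iS).
by rewrite ij sub // inE in_cross_edges ?orbT.
Qed.

End LinkEdges.

Lemma card_disjoint_ksets n (t : {set 'I_n}) k :
  #|disjoint_ksets t k| = 'C(n - #|t|, k).
Proof.
have -> : disjoint_ksets t k = [set s : {set 'I_n} | s \subset ~: t & #|s| == k].
  by apply/setP => s; rewrite !inE disjoints_subset andbC.
by rewrite cards_draws cardsCs setCK card_ord.
Qed.

(* Each s' is counted through the pair (v, s' :\ v) with v the common vertex
   and s' :\ v a k-subset of the complement of s :|: t. *)
Lemma card_meet1_ksets n (s t : {set 'I_n}) m k : #|s| = m -> [disjoint s & t] ->
  (m * 'C(n - #|t| - m, k) <=
   #|[set s' in disjoint_ksets t k.+1 | #|s :&: s'| == 1%N]|)%N.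
Proof.
move=> cs st; set D := ~: (s :|: t).
set Dk := [set W : {set 'I_n} | W \subset D & #|W| == k].
have cD : #|D| = (n - #|t| - m)%N.
  by rewrite cardsCs setCK card_ord cardsU disjoint_setI0 // cards0 subn0 cs subnDA subnAC.
have -> : (m * 'C(n - #|t| - m, k) = #|setX s Dk|)%N by rewrite cardsX cs cards_draws cD.
have fresh v W : v \in s -> W \in Dk -> v \notin W /\ s :&: (v |: W) = [set v].
  move=> vs; rewrite inE => /andP [WD _]; split.
    by apply/negP => /(subsetP WD); rewrite !inE vs.
  apply/setP => x; rewrite !inE; apply/andP/eqP => [[xs /orP [/eqP // | xW]] | ->].
    by move/(subsetP WD): xW; rewrite !inE xs.
  by rewrite vs eqxx.
rewrite -(@card_in_imset _ _ (fun x => x.1 |: x.2)); last first.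
  move=> [v W] [v' W']; rewrite !in_setX /= => /andP [vs WDk] /andP [v's W'Dk] E.
  have [vW sI] := fresh v W vs WDk; have [v'W' sI'] := fresh v' W' v's W'Dk.
  have vv' : v = v' by apply/set1P; rewrite -sI' -E sI set11.
  by subst v'; congr (_, _); rewrite -(setU1K vW) E setU1K.
apply: subset_leq_card; apply/subsetP => x /imsetP [[v W]].
rewrite in_setX /= => /andP [vs WDk] ->.
have [vW sI] := fresh v W vs WDk.
move: WDk; rewrite inE => /andP [WD /eqP cW].
rewrite !inE sI cards1 cardsU1 vW cW !eqxx andbT disjoints_subset.
apply/subsetP => y; rewrite !inE => /orP [/eqP -> | yW]; first by rewrite (disjointFr st vs).
by move/(subsetP WD): yW; rewrite !inE negb_or => /andP [].
Qed.

(* p^|A| p^|B| = p^|A :|: B| p^|A :&: B|, so the covariance is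
   p^|A :|: B| (1 - p^|A :&: B|). *)
Lemma expr_cov_ge (R : realFieldType) (p : R) (T : finType) (A B : {set T}) m :
  0 < p -> p <= 1 -> (m <= #|A :&: B|)%N ->
  p ^+ #|A| * p ^+ #|B| * ((p ^+ m)^-1 - 1) <= p ^+ #|A :|: B| - p ^+ #|A| * p ^+ #|B|.
Proof.
move=> p0 p1 mAB.
have pm0 : p ^+ m != 0 by rewrite expf_neq0 // gt_eqF.
rewrite -exprD -cardsUI -(subnK mAB) !exprD.
rewrite mulrBr mulr1 -!mulrA mulfV // mulr1 mulrA lerD2r.
by apply: ler_piMr; [apply/exprn_ge0/ltW | apply: exprn_ile1 => //; apply: ltW].
Qed.

Lemma expr_cov_ge0 (R : realFieldType) (p : R) (T : finType) (A B : {set T}) :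
  0 < p -> p <= 1 -> 0 <= p ^+ #|A :|: B| - p ^+ #|A| * p ^+ #|B|.
Proof.
move=> p0 p1; have := @expr_cov_ge R p T A B 0 p0 p1 (leq0n _).
by rewrite expr0 invr1 subrr mulr0.
Qed.

Section GnpMoments.
Variables (R : realFieldType) (n : nat) (p : R).

Lemma eq_gnp_E (X Y : {set {set 'I_n}} -> R) : X =1 Y -> gnp_E p X = gnp_E p Y.
Proof. by move=> eqXY; apply: eq_bigr => G _; rewrite eqXY. Qed.

Lemma eq_gnp_Var (X Y : {set {set 'I_n}} -> R) : X =1 Y -> gnp_Var p X = gnp_Var p Y.
Proof.
move=> eqXY; rewrite /gnp_Var (eq_gnp_E eqXY).
by rewrite (eq_gnp_E (Y := fun G => Y G ^+ 2)) // => G; rewrite eqXY.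
Qed.

Lemma gnp_E_sum (I : finType) (S : {set I}) (F : I -> {set {set 'I_n}} -> R) :
  gnp_E p (fun G => \sum_(i in S) F i G) = \sum_(i in S) gnp_E p (F i).
Proof.
by rewrite /gnp_E; under eq_bigr => G _ do rewrite big_distrr; rewrite exchange_big.
Qed.

(* Expand \prod_e (p [e in P] + (1 - p) [e in P :\: A] + [e \notin P]), whose
   value is p^|A|, over the graphs G: the term of G is gnp_prob p G [A \subset G]. *)
Lemma gnp_E_subset (A : {set {set 'I_n}}) :
  A \subset pairs n -> gnp_E p (fun G => (A \subset G)%:R) = p ^+ #|A|.
Proof.
move=> AP; set P := pairs n.
pose f e := if e \in P then p else 0.
pose g e := if e \in P then (if e \in A then 0 else 1 - p) else 1.
have prod_fg : \prod_(e : {set 'I_n}) (f e + g e) = p ^+ #|A|.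
  rewrite -prodr_const [RHS]big_mkcond /=; apply: eq_bigr => e _.
  rewrite /f /g; have [eA | eA] := boolP (e \in A); first by rewrite (subsetP AP e eA) addr0.
  by case: ifP => _; rewrite ?add0r // addrC subrK.
rewrite -prod_fg bigA_distr /gnp_E big_mkcond /=; apply: eq_bigr => G _; symmetry.
rewrite powersetE; have [GP | /subsetPn [e eG eP]] := boolP (G \subset P); last first.
  by rewrite (bigD1 e) //= eG /f (negbTE eP) mul0r.
have [AG | /subsetPn [e eA eG]] := boolP (A \subset G); last first.
  by rewrite mulr0 (bigD1 e) //= (negbTE eG) /g (subsetP AP e eA) eA mul0r.
rewrite mulr1 /gnp_prob (eq_bigr (fun e =>
  (if e \in G then p else 1) * (if e \in P :\: G then 1 - p else 1))); last first.
  move=> e _; rewrite inE /f /g; case: ifP => eG; first by rewrite (subsetP GP e eG) mulr1.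
  rewrite mul1r /=; case: ifP => // eP.
  by rewrite ifN //; apply: contraFN eG => /(subsetP AG).
by rewrite big_split /= -!big_mkcond /= !prodr_const cardsD (setIidPr GP).
Qed.

Lemma gnp_Var_sum_subset (I : finType) (S : {set I}) (A : I -> {set {set 'I_n}}) :
  (forall i, i \in S -> A i \subset pairs n) ->
  gnp_Var p (fun G => \sum_(i in S) ((A i \subset G)%:R : R)) =
  \sum_(i in S) \sum_(j in S) (p ^+ #|A i :|: A j| - p ^+ #|A i| * p ^+ #|A j|).
Proof.
move=> AP; rewrite /gnp_Var gnp_E_sum.
under eq_bigr => i iS do rewrite gnp_E_subset ?AP //.
rewrite (eq_gnp_E (Y := fun G => \sum_(i in S) \sum_(j in S)
                                 ((A i :|: A j \subset G)%:R : R))); last first.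
  move=> G; rewrite expr2 big_distrl; apply: eq_bigr => i _.
  by rewrite big_distrr; apply: eq_bigr => j _; rewrite /= -natrM mulnb subUset.
rewrite (gnp_E_sum S (fun i G => \sum_(j in S) ((A i :|: A j \subset G)%:R : R))).
rewrite expr2 big_distrl -sumrB; apply: eq_bigr => i iS.
rewrite (gnp_E_sum S (fun j G => ((A i :|: A j \subset G)%:R : R))).
rewrite big_distrr -sumrB; apply: eq_bigr => j jS.
by rewrite gnp_E_subset // subUset !AP.
Qed.

End GnpMoments.

Lemma TlinkE (R : realFieldType) n (t : {set 'I_n}) k G :
  Tlink R t k G = \sum_(s in disjoint_ksets t k) ((link_edges s t \subset G)%:R : R).
Proof.
apply: eq_big => [s | s]; first by rewrite inE.
by move=> /andP [_ st]; apply: Tlink_summandE.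
Qed.

Lemma gnp_Var_Tlink (R : realFieldType) n (p : R) (t : {set 'I_n}) k :
  gnp_Var p (Tlink R t k) =
  \sum_(s in disjoint_ksets t k) \sum_(s' in disjoint_ksets t k)
    (p ^+ #|link_edges s t :|: link_edges s' t|
     - p ^+ #|link_edges s t| * p ^+ #|link_edges s' t|).
Proof.
rewrite (eq_gnp_Var p (TlinkE R t k)) gnp_Var_sum_subset // => s.
by rewrite inE => /andP [_ /link_edges_pairs].
Qed.

Lemma Tlink_cov_row_ge (R : realFieldType) n (p : R) (t s : {set 'I_n}) k :
  0 < p -> p <= 1 -> s \in disjoint_ksets t k.+1 ->
  (k.+1 * 'C(n - #|t| - k.+1, k))%:R * (mu p t k.+1 ^+ 2 * ((p ^+ #|t|)^-1 - 1)) <=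
  \sum_(s' in disjoint_ksets t k.+1)
    (p ^+ #|link_edges s t :|: link_edges s' t|
     - p ^+ #|link_edges s t| * p ^+ #|link_edges s' t|).
Proof.
move=> p0 p1; rewrite inE => /andP [/eqP cs st].
set c := mu p t k.+1 ^+ 2 * _.
have c0 : 0 <= c.
  apply: mulr_ge0; first exact/exprn_ge0/exprn_ge0/ltW.
  by rewrite subr_ge0 invf_ge1 ?exprn_gt0 // exprn_ile1 // ltW.
set A := [set s' in disjoint_ksets t k.+1 | #|s :&: s'| == 1%N].
rewrite (bigID (fun s' => #|s :&: s'| == 1%N)) /= -[X in X <= _]addr0.
apply: lerD; last by apply: sumr_ge0 => s' _; apply: expr_cov_ge0.
rewrite (eq_bigl (mem A)) => [|s']; last by rewrite !inE.
apply: (@le_trans _ _ (\sum_(s' in A) c)).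
  rewrite sumr_const -[c *+ _]mulr_natl; apply: (ler_wpM2r c0); rewrite ler_nat.
  exact: card_meet1_ksets.
apply: ler_sum => s'; rewrite !inE => /andP [/andP [/eqP cs' st'] /cards1P [v ss'v]].
have /setIP [vs vs'] : v \in s :&: s' by rewrite ss'v set11.
have Es : #|link_edges s t| = ('C(k.+1, 2) + #|t| * k.+1)%N by rewrite card_link_edges ?cs.
have Es' : #|link_edges s' t| = ('C(k.+1, 2) + #|t| * k.+1)%N by rewrite card_link_edges ?cs'.
rewrite /c /mu expr2 -{1}Es -Es'.
exact: expr_cov_ge p0 p1 (card_link_edgesI st vs vs').
Qed.

Theorem lemma5p1 (R : realFieldType) (n : nat) (p : R) (t : {set 'I_n}) (k : nat) :
  0 < p -> p < 1 -> (1 <= k)%N -> (k <= n - 1)%N ->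
  gnp_Var p (Tlink R t k.+1) >=
    (k.+1)%:R * ('C(n - #|t|, 2 * k + 1))%:R * ('C(2 * k + 1, k))%:R
      * (mu p t k.+1) ^+ 2 * ((p ^+ #|t|)^-1 - 1).
Proof.
move=> p0 /ltW p1 _ _.
have count : ('C(n - #|t|, k.+1) * (k.+1 * 'C(n - #|t| - k.+1, k))
             = k.+1 * 'C(n - #|t|, 2 * k + 1) * 'C(2 * k + 1, k))%N.
  have -> : 'C(2 * k + 1, k) = 'C(k.+1 + k, k.+1).
    by rewrite -bin_sub; [congr 'C(_, _); lia | lia].
  by rewrite mulnCA bin_mul_bin_sub mulnA (_ : k.+1 + k = 2 * k + 1)%N //; lia.
rewrite gnp_Var_Tlink.
apply: le_trans (ler_sum _ (fun s sS => Tlink_cov_row_ge p0 p1 sS)).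
rewrite sumr_const card_disjoint_ksets -[X in _ <= X]mulr_natl [X in _ <= X]mulrA.
by rewrite -[X in _ <= X * _]natrM count !natrM !mulrA.
Qed.
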